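(* Let $V_\pm$ be real symmetric $n\times n$ matrices with all eigenvalues nonnegative, and let $\nu_{\min}\ge 0$ be the smallest eigenvalue of $V_+$ and $V_-$. For any $\lambda<\nu_{\min}$, the spectrum of $$\tilde{\mathcal W}^-(\lambda):=-(R^-+iS^-(\lambda))(R^--iS^-(\lambda))^{-1}(R^+-iS^+(\lambda))(R^++iS^+(\lambda))^{-1}$$ does not include $-1$.
   Context: Let $\nu_1^\pm\le\dots\le\nu_n^\pm$ be the eigenvalues of $V_\pm$ with orthonormal eigenvectors $r_j^\pm$. For $\lambda<\nu_{\min}$, $\mu^\pm_j(\lambda)=-\sqrt{\nu^\pm_{n+1-j}-\lambda}$ and $\mu^\pm_{n+j}(\lambda)=\sqrt{\nu_j^\pm-\lambda}$, $j=1,\dots,n$. $R^-=(r^-_1\ r^-_2\ \cdots\ r^-_n)$, $S^-(\lambda)=(\mu^-_{n+1}(\lambda)r^-_1\ \cdots\ \mu^-_{2n}(\lambda)r^-_n)$, $R^+=(r^+_n\ r^+_{n-1}\ \cdots\ r^+_1)$, $S^+(\lambda)=(\mu^+_1(\lambda)r^+_n\ \mu^+_2(\lambda)r^+_{n-1}\ \cdots\ \mu^+_n(\lambda)r^+_1)$ (columns listed). (In this setting the paper works with $V_\pm=\lim_{x\to\pm\infty}V(x)$ for a continuous symmetric potential $V$ satisfying an integrability condition, but the claim involves only $V_\pm$.) *)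

From HB Require Import structures.
From mathcomp Require Import all_boot all_order all_algebra.
From mathcomp Require Import complex reals.
Set Implicit Arguments. Unset Strict Implicit. Unset Printing Implicit Defensive.
Import Order.TTheory GRing.Theory Num.Theory.
Local Open Scope ring_scope.

(* Matrix dimension is n.+1 (n.+1 x n.+1 real matrices); indices 0..n
   correspond to the paper's 1..n+1. Eigenvectors are column vectors
   r j : 'cV_(n.+1). *)

(* mu^pm_j(lambda), j = 1..n  (0-indexed: j : 'I_n.+1), negative branch:
   mu_j = - sqrt(nu_{n+1-j} - lambda) *)
Definition mu_lo (n : nat) (R : realType) (nu : 'I_n.+1 -> R) (lam : R)
  (j : 'I_n.+1) : R := - Num.sqrt (nu (rev_ord j) - lam).

(* mu^pm_{n+j}(lambda) = sqrt(nu_j - lambda) *)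
Definition mu_hi (n : nat) (R : realType) (nu : 'I_n.+1 -> R) (lam : R)
  (j : 'I_n.+1) : R := Num.sqrt (nu j - lam).

Definition cols (n : nat) (R : realType) (c : 'I_n.+1 -> 'cV[R]_n.+1)
  : 'M[R]_n.+1 := \matrix_(i, j) c j i 0.

Definition Rminus n (R : realType) (r : 'I_n.+1 -> 'cV[R]_n.+1) :=
  cols r.
Definition Sminus n (R : realType) (nu : 'I_n.+1 -> R)
  (r : 'I_n.+1 -> 'cV[R]_n.+1) (lam : R) :=
  cols (fun j => mu_hi nu lam j *: r j).
Definition Rplus n (R : realType) (r : 'I_n.+1 -> 'cV[R]_n.+1) :=
  cols (fun j => r (rev_ord j)).
Definition Splus n (R : realType) (nu : 'I_n.+1 -> R)
  (r : 'I_n.+1 -> 'cV[R]_n.+1) (lam : R) :=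
  cols (fun j => mu_lo nu lam j *: r (rev_ord j)).

Definition cplx n (R : realType) (A B : 'M[R]_n.+1) : 'M[R[i]]_n.+1 :=
  \matrix_(i, j) (Complex (A i j) (B i j)).

Definition Wtilde n (R : realType) (num nup : 'I_n.+1 -> R)
  (rm rp : 'I_n.+1 -> 'cV[R]_n.+1) (lam : R) : 'M[R[i]]_n.+1 :=
  - (cplx (Rminus rm) (Sminus num rm lam)
     *m invmx (cplx (Rminus rm) (- Sminus num rm lam))
     *m cplx (Rplus rp) (- Splus nup rp lam)
     *m invmx (cplx (Rplus rp) (Splus nup rp lam))).

Definition ordered_orthonormal_eigensystem n (R : realType)
  (V : 'M[R]_n.+1) (nu : 'I_n.+1 -> R) (r : 'I_n.+1 -> 'cV[R]_n.+1) : Prop :=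
  [/\ forall j, V *m r j = nu j *: r j,
      forall i j, ((r i)^T *m r j) = (i == j)%:R%:M &
      forall i j : 'I_n.+1, (i <= j)%N -> nu i <= nu j].

From HB Require Import structures.
From mathcomp Require Import all_boot all_order all_algebra.
From mathcomp Require Import complex reals.
From mathcomp Require Import ring.
Set Implicit Arguments. Unset Strict Implicit.
Import Order.TTheory GRing.Theory Num.Theory.
Local Open Scope ring_scope.

(* With X = R^-, Y = R^+ (real orthogonal), d_j = mu^-_{n+j} > 0 and
   e_j = mu^+_j <= 0 one has R^- +- iS^- = X diag(1 +- i d) and
   R^+ -+ iS^+ = Y diag(1 -+ i e).  If v W = -v, put
   a = v X diag(1 + i d) diag(1 - i d)^-1 X^T, p = a - v and q = a + v.
   Coordinatewise pX = i d (qX) and pY = i e (qY), so computing the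
   Hermitian product <p, q> in both orthonormal bases gives
   sum_j d_j |(qX)_j|^2 = sum_j e_j |(qY)_j|^2.  The left side is >= 0 and
   the right side <= 0, hence qX = 0, so q = p = 0 and v = (q - p)/2 = 0. *)

Lemma weighted_sum_le0_eq0 (F : numDomainType) (I : finType) (d c : I -> F) :
  (forall j, 0 < d j) -> (forall j, 0 <= c j) ->
  \sum_j d j * c j <= 0 -> forall j, c j = 0.
Proof.
move=> d_gt0 c_ge0 sum_le0 j.
have dc_ge0 i : 0 <= d i * c i by rewrite mulr_ge0 // ltW.
have : \sum_i d i * c i == 0 by rewrite eq_le sum_le0 sumr_ge0.
rewrite psumr_eq0 // => /allP/(_ j (mem_index_enum _)).
by rewrite mulf_eq0 gt_eqF //= => /eqP.
Qed.

Section CayleyPair.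
Variable R : realType.
Local Open Scope complex_scope.

Definition cmx m n (A : 'M[R]_(m, n)) : 'M[R[i]]_(m, n) :=
  map_mx (real_complex R) A.

Definition diag1i k (d : 'I_k -> R) : 'M[R[i]]_k :=
  diag_mx (\row_j (1 + 'i * (d j)%:C)).

Definition cdot k (u w : 'rV[R[i]]_k) : R[i] :=
  (u *m (map_mx conjc w)^T) 0 0.

Lemma cdotE k (u w : 'rV[R[i]]_k) : cdot u w = \sum_j u 0 j * (w 0 j)^*.
Proof. by rewrite /cdot mxE; apply: eq_bigr => j _; rewrite !mxE. Qed.

Lemma complex_1i_neq0 (a : R) : 1 + 'i * a%:C != 0.
Proof. by rewrite eq_complex /= negb_and !mul0r mul1r subr0 !addr0 oner_neq0. Qed.

Lemma diag1i_unit k (d : 'I_k -> R) : diag1i d \in unitmx.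
Proof.
rewrite unitmxE det_diag unitfE; apply/prodf_neq0 => j _.
by rewrite mxE complex_1i_neq0.
Qed.

Lemma cplx_diag1i k (X S : 'M[R]_k.+1) (d : 'I_k.+1 -> R) :
  (forall i j, S i j = X i j * d j) -> cplx X S = cmx X *m diag1i d.
Proof.
move=> S_def; apply/matrixP => i j; rewrite mul_mx_diag !mxE S_def.
by apply/eqP; rewrite eq_complex /=; apply/andP; split; apply/eqP; ring.
Qed.

Lemma cmx_orthogonal k (X : 'M[R]_k) :
  X^T *m X = 1%:M -> cmx X *m (cmx X)^T = 1%:M.
Proof.
move=> XtX; apply: mulmx1C.
by rewrite /cmx map_trmx -map_mxM XtX map_mx1.
Qed.

Lemma cdot_orthogonal k (X : 'M[R]_k) (u w : 'rV[R[i]]_k) :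
  cmx X *m (cmx X)^T = 1%:M -> cdot (u *m cmx X) (w *m cmx X) = cdot u w.
Proof.
have conj_cmx : map_mx conjc (cmx X) = cmx X.
  by apply/matrixP => i j; rewrite !mxE conjc_real.
move=> XXt; rewrite /cdot map_mxM conj_cmx trmx_mul mulmxA -(mulmxA u) XXt.
by rewrite mulmx1.
Qed.

Lemma diag1i_mulmx_eq k (M : 'M[R[i]]_k) (d : 'I_k -> R) (a v : 'rV_k) :
  a *m (M *m diag1i (fun j => - d j)) = v *m (M *m diag1i d) ->
  forall j, ((a - v) *m M) 0 j = 'i * (d j)%:C * ((a + v) *m M) 0 j.
Proof.
move=> aMv j; have := congr1 (fun N : 'rV_k => N 0 j) aMv.
rewrite !mulmxA !mul_mx_diag mulmxBl mulmxDl.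
move: (a *m M) (v *m M) => A V; rewrite !mxE => AV; apply: subr0_eq.
transitivity (A 0 j * (1 + 'i * (- d j)%:C) - V 0 j * (1 + 'i * (d j)%:C)).
  by rewrite raddfN; ring.
by rewrite AV subrr.
Qed.

Lemma cdot_diag1i k (X : 'M[R]_k) (d : 'I_k -> R) (p q : 'rV[R[i]]_k) :
  X^T *m X = 1%:M ->
  (forall j, (p *m cmx X) 0 j = 'i * (d j)%:C * (q *m cmx X) 0 j) ->
  cdot p q = 'i * \sum_j (d j)%:C * ((q *m cmx X) 0 j * ((q *m cmx X) 0 j)^*).
Proof.
move=> /cmx_orthogonal XXt pX; rewrite -(cdot_orthogonal p q XXt) cdotE mulr_sumr.
by apply: eq_bigr => j _; rewrite pX; ring.
Qed.

Lemma cayley_pair_no_eigenvalueN1 k (X Y : 'M[R]_k.+1) (d e : 'I_k.+1 -> R) :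
  X^T *m X = 1%:M -> Y^T *m Y = 1%:M ->
  (forall j, 0 < d j) -> (forall j, e j <= 0) ->
  ~~ eigenvalue (- (cmx X *m diag1i d *m invmx (cmx X *m diag1i (fun j => - d j))
      *m (cmx Y *m diag1i (fun j => - e j)) *m invmx (cmx Y *m diag1i e))) (-1).
Proof.
move=> XtX YtY d_gt0 e_le0; apply/eigenvalueP => -[v vW v_neq0].
have X_unit : cmx X \in unitmx by case/mulmx1_unit: (cmx_orthogonal XtX).
have Y_unit : cmx Y \in unitmx by case/mulmx1_unit: (cmx_orthogonal YtY).
have unitXD d' : cmx X *m diag1i d' \in unitmx by rewrite unitmx_mul X_unit diag1i_unit.
have unitYD e' : cmx Y *m diag1i e' \in unitmx by rewrite unitmx_mul Y_unit diag1i_unit.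
set a := v *m (cmx X *m diag1i d) *m invmx (cmx X *m diag1i (fun j => - d j)).
have aX : a *m (cmx X *m diag1i (fun j => - d j)) = v *m (cmx X *m diag1i d).
  by rewrite mulmxKV ?unitXD.
have aY : a *m (cmx Y *m diag1i (fun j => - e j)) = v *m (cmx Y *m diag1i e).
  have aYv : a *m (cmx Y *m diag1i (fun j => - e j)) *m invmx (cmx Y *m diag1i e) = v.
    by move: vW; rewrite scaleN1r mulmxN => /oppr_inj; rewrite /a !mulmxA.
  by rewrite -aYv mulmxKV ?unitYD.
set p := a - v; set q := a + v.
pose wX j := (q *m cmx X) 0 j * ((q *m cmx X) 0 j)^*.
pose wY j := (q *m cmx Y) 0 j * ((q *m cmx Y) 0 j)^*.
have sumXY : \sum_j (d j)%:C * wX j = \sum_j (e j)%:C * wY j.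
  apply: (@mulfI _ 'i); first by rewrite eq_complex /= negb_and oner_neq0 orbT.
  rewrite -(cdot_diag1i XtX (diag1i_mulmx_eq aX)).
  by rewrite -(cdot_diag1i YtY (diag1i_mulmx_eq aY)).
have wX0 : forall j, wX j = 0.
  apply: (weighted_sum_le0_eq0 (d := fun j => (d j)%:C)) => [j|j|].
  - by rewrite ltcR.
  - exact: mulcJ_ge0.
  - rewrite sumXY; apply: sumr_le0 => j _.
    by rewrite mulr_le0_ge0 ?mulcJ_ge0 // lecR.
have qX0 : q *m cmx X = 0.
  apply/matrixP => i j; rewrite ord1 [RHS]mxE.
  by have /eqP := wX0 j; rewrite /wX mulf_eq0 conjc_eq0 orbb => /eqP.
have pX0 : p *m cmx X = 0.
  by apply/matrixP => i j; rewrite ord1 (diag1i_mulmx_eq aX) qX0 !mxE mulr0.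
have q0 : q = 0 by rewrite -(mulmxK X_unit q) qX0 mul0mx.
have p0 : p = 0 by rewrite -(mulmxK X_unit p) pX0 mul0mx.
have : q - p = v *+ 2 by rewrite /q /p opprD opprK addrACA subrr add0r mulr2n.
rewrite q0 p0 subrr -scaler_nat => /esym/eqP.
by rewrite scaler_eq0 pnatr_eq0 (negPf v_neq0).
Qed.

End CayleyPair.

Lemma cols_orthonormal (R : realType) n (r : 'I_n.+1 -> 'cV[R]_n.+1)
    (f : 'I_n.+1 -> 'I_n.+1) :
  injective f -> (forall i j, (r i)^T *m r j = (i == j)%:R%:M) ->
  (cols (fun j => r (f j)))^T *m cols (fun j => r (f j)) = 1%:M.
Proof.
move=> f_inj r_orth; apply/matrixP => i j.
have := congr1 (fun M : 'M[R]_1 => M 0 0) (r_orth (f i) (f j)).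
rewrite (inj_eq f_inj) !mxE mulr1n => <-.
by apply: eq_bigr => k _; rewrite !mxE.
Qed.

Theorem lemma4p5 (R : realType) (n : nat) (Vp Vm : 'M[R]_n.+1)
  (nup num : 'I_n.+1 -> R) (rp rm : 'I_n.+1 -> 'cV[R]_n.+1) (lam : R) :
  Vp^T = Vp -> Vm^T = Vm ->
  (forall a : R, eigenvalue Vp a -> 0 <= a) ->
  (forall a : R, eigenvalue Vm a -> 0 <= a) ->
  ordered_orthonormal_eigensystem Vp nup rp ->
  ordered_orthonormal_eigensystem Vm num rm ->
  lam < Num.min (nup ord0) (num ord0) ->
  ~~ eigenvalue (Wtilde num nup rm rp lam) (-1).
Proof.
move=> _ _ _ _ [_ rp_orth _] [_ rm_orth num_le]; rewrite lt_min => /andP[_ lam_lt].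
rewrite /Wtilde.
rewrite (@cplx_diag1i _ _ _ _ (mu_hi num lam)); last by move=> i j; rewrite !mxE mulrC.
rewrite (@cplx_diag1i _ _ _ _ (fun j => - mu_hi num lam j)); last first.
  by move=> i j; rewrite !mxE mulrN mulrC.
rewrite (@cplx_diag1i _ _ _ _ (fun j => - mu_lo nup lam j)); last first.
  by move=> i j; rewrite !mxE mulrN mulrC.
rewrite (@cplx_diag1i _ _ _ _ (mu_lo nup lam)); last by move=> i j; rewrite !mxE mulrC.
apply: cayley_pair_no_eigenvalueN1.
- exact: (@cols_orthonormal _ _ rm id (fun _ _ => id) rm_orth).
- exact: (cols_orthonormal rev_ord_inj rp_orth).
- move=> j; rewrite /mu_hi sqrtr_gt0 subr_gt0.
  by apply: (lt_le_trans lam_lt); apply: num_le.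
- by move=> j; rewrite /mu_lo oppr_le0 sqrtr_ge0.
Qed.
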